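(* Let $S$ be a connected shape in the triangular grid $G$ and let $h$ be a hole point of $S$. Then there exist points $v_1, v_2 \in S$ such that $h$ lies on a shortest path (in $G$) between $v_1$ and $v_2$.
   Context: The triangular grid $G$ is the infinite graph whose vertices (''points'') are the points of the regular triangular lattice in the plane, two points being adjacent iff they are at unit distance; every point has exactly six neighbors. A shape is a finite set of points of $G$, identified with the subgraph of $G$ it induces. A connected shape $S$ partitions the plane into faces (regions bounded by its points and edges), exactly one of which is unbounded (the outer face). A bounded face containing at least one grid point not in $S$ is a hole of $S$; the grid points lying in holes of $S$ are called hole points of $S$. *)

From Stdlib Require Import Reals.
From HB Require Import structures.
From mathcomp Require Import all_boot all_order all_algebra.
From mathcomp Require Import all_classical all_reals all_analysis.
From mathcomp Require Import Rstruct Rstruct_topology.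

Set Implicit Arguments. Unset Strict Implicit. Unset Printing Implicit Defensive.
Import Order.TTheory GRing.Theory Num.Theory.
Local Open Scope classical_set_scope.
Local Open Scope ring_scope.

(* Points of the triangular grid G in axial coordinates: (a, b) : int * int
   denotes the lattice point  a * (1, 0) + b * (1/2, sqrt 3 / 2)  of the plane. *)
Definition gpt := (int * int)%type.

Definition emb (p : gpt) : R * R :=
  ((p.1)%:~R + (p.2)%:~R / 2, Num.sqrt (3 : R) / 2 * (p.2)%:~R).

Definition gadj (p q : gpt) : bool :=
  let d : int * int := (q.1 - p.1, q.2 - p.2) in
  d \in ([:: (1, 0); (0, 1); (-1, 1); (-1, 0); (0, -1); (1, -1)] : seq (int * int)).

(* A walk in G from u along the sequence s (ending at last u s); its length is size s. *)
Definition gwalk (u : gpt) (s : seq gpt) (v : gpt) : Prop :=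
  path gadj u s /\ last u s = v.

Definition on_shortest_path (u v h : gpt) : Prop :=
  exists s, [/\ gwalk u s v, h \in u :: s &
    forall s', gwalk u s' v -> (size s <= size s')%N].

Definition connected_shape (S : set gpt) : Prop :=
  finite_set S /\
  forall u v, S u -> S v ->
    exists s, gwalk u s v /\ (forall x, x \in s -> S x).

Definition drawing (S : set gpt) : set (R * R) :=
  [set z | exists p, S p /\ z = emb p] `|`
  [set z | exists p q, [/\ S p, S q, gadj p q &
     exists t : R, [/\ 0 <= t, t <= 1 &
       z = ((1 - t) * (emb p).1 + t * (emb q).1,
            (1 - t) * (emb p).2 + t * (emb q).2)]]].

Definition face (S : set gpt) (F : set (R * R)) : Prop :=
  exists x, (~` drawing S) x /\ F = connected_component (~` drawing S) x.

Definition bounded_plane (F : set (R * R)) : Prop :=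
  exists M : R, forall z, F z -> `|z.1| <= M /\ `|z.2| <= M.

Definition hole (S : set gpt) (F : set (R * R)) : Prop :=
  [/\ face S F, bounded_plane F & exists g, ~ S g /\ F (emb g)].

Definition hole_point (S : set gpt) (h : gpt) : Prop :=
  exists F, hole S F /\ F (emb h).

From Stdlib Require Import Reals.
From mathcomp Require Import all_boot all_order all_algebra.
From mathcomp Require Import all_classical all_reals all_analysis.
From mathcomp Require Import Rstruct Rstruct_topology.
From mathcomp Require Import zify ring lra.

(* A hole point h has points of S on its own row on both sides: if, say, no point
   of S on the row of h lies to its right, the horizontal ray from h to the right
   avoids the drawing of S, so it stays in the face of h, which is then unbounded.
   Two such points p and q are joined by the straight walk along the row, which
   passes through h and is shortest because each step of G changes the first axial
   coordinate by at most one. *)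

Set Implicit Arguments.
Unset Strict Implicit.
Unset Printing Implicit Defensive.

Import Order.TTheory GRing.Theory Num.Theory.
Local Open Scope classical_set_scope.
Local Open Scope ring_scope.

Lemma gadj_cases (p q : gpt) : gadj p q ->
  let dx := q.1 - p.1 in let dy := q.2 - p.2 in
  [|| (dx == 1) && (dy == 0), (dx == 0) && (dy == 1), (dx == -1) && (dy == 1),
      (dx == -1) && (dy == 0), (dx == 0) && (dy == -1) | (dx == 1) && (dy == -1)].
Proof. by rewrite /gadj !inE !xpair_eqE. Qed.

Lemma path_dist1_le_size (u : gpt) (s : seq gpt) :
  path gadj u s -> `|(last u s).1 - u.1| <= (size s)%:Z.
Proof.
elim: s u => [|x s IH] u /=; first by rewrite subrr.
by case/andP=> /gadj_cases /= ux /IH; lia.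
Qed.

Lemma row_gwalk (p : gpt) (n : nat) : exists s,
  [/\ gwalk p s (p.1 + n%:Z, p.2), size s = n &
      forall m : nat, (m <= n)%N -> (p.1 + m%:Z, p.2) \in p :: s].
Proof.
elim: n p => [|n IH] [a b] /=.
  exists [::]; split => //=; first by rewrite addr0.
  by move=> m; rewrite leqn0 => /eqP ->; rewrite addr0 mem_head.
have [s [[ps ls] ss ms]] := IH (a + 1, b).
exists ((a + 1, b) :: s); split => /=.
- split=> /=; last by rewrite ls; congr pair => /=; lia.
  by rewrite ps andbT /gadj /= !inE; apply/orP; left; apply/eqP; congr pair; ring.
- by rewrite ss.
- case=> [|m] lm; first by rewrite addr0 mem_head.
  rewrite in_cons; apply/orP; right.
  have -> : a + m.+1%:Z = a + 1 + m%:Z by lia.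
  exact: ms.
Qed.

Lemma on_shortest_path_row (p q h : gpt) :
  p.2 = h.2 -> q.2 = h.2 -> p.1 <= h.1 <= q.1 -> on_shortest_path p q h.
Proof.
case: p q h => [a b] [c d] [x y] /= -> -> /andP[ax xc].
have [s [[ps ls] ss ms]] := row_gwalk (a, y) `|c - a|%N.
exists s; split.
- by split=> //; rewrite ls /=; congr pair; lia.
- have -> : (x, y) = (a + (`|x - a|%N)%:Z, y) by congr pair; lia.
  by apply: ms; lia.
- move=> s' [ps' ls'].
  by have := path_dist1_le_size ps'; rewrite ls' ss /=; lia.
Qed.

Lemma sqrt3_half_neq0 : Num.sqrt (3 : R) / 2 != 0.
Proof.
by rewrite mulf_neq0 ?invr_eq0 // sqrtr_eq0 -ltNge; apply/RltP; exact: (IZR_lt 0 3).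
Qed.

Lemma emb2_inj (p q : gpt) : (emb p).2 = (emb q).2 -> p.2 = q.2.
Proof. by move/(mulfI sqrt3_half_neq0)/eqP; rewrite eqr_int => /eqP. Qed.

Lemma convex_comb_int (a b c : int) (t : R) : `|b - a| <= 1 -> 0 <= t -> t <= 1 ->
  (1 - t) * a%:~R + t * b%:~R = c%:~R -> [\/ a = c /\ b = c, t = 0 | t = 1].
Proof.
move=> ab t0 t1 E.
have t_int (m : int) : t = m%:~R -> [\/ a = c /\ b = c, t = 0 | t = 1].
  move=> tm; move: t0 t1; rewrite tm -[0]/(0%:~R) -[1]/(1%:~R) !ler_int => m0 m1.
  have [->|->] : m = 0 \/ m = 1 by lia.
  - exact: Or32.
  - exact: Or33.
have [ba|[ba|ba]] : b = a \/ b = a + 1 \/ b = a - 1 by lia.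
- by apply: Or31; move: E; rewrite ba -mulrDl subrK mul1r => /eqP; rewrite eqr_int => /eqP.
- by apply: (t_int (c - a)); rewrite intrB -E ba intrD; ring.
- by apply: (t_int (a - c)); rewrite intrB -E ba intrB; ring.
Qed.

Lemma convex_comb_between (x y t : R) : 0 <= t -> t <= 1 -> x <= y ->
  x <= (1 - t) * x + t * y <= y.
Proof. by move=> t0 t1 xy; apply/andP; split; nra. Qed.

Lemma drawing_on_row (S : set gpt) (g : gpt) (z : R * R) :
  drawing S z -> z.2 = (emb g).2 ->
  exists p q, [/\ S p, S q, p.2 = g.2, q.2 = g.2 & (emb p).1 <= z.1 <= (emb q).1].
Proof.
case=> [[p [Sp ->]] | [p [q [Sp Sq pq [t [t0 t1 ->]]]]]] /=.
  by move/emb2_inj=> pg; exists p, p; rewrite lexx.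
move=> zg.
have E : (1 - t) * p.2%:~R + t * q.2%:~R = g.2%:~R :> R.
  by apply: (mulfI sqrt3_half_neq0); rewrite -zg; ring.
have dq : `|q.2 - p.2| <= 1 by move: pq => /gadj_cases /=; lia.
have [[pg qg]|t_0|t_1] := convex_comb_int dq t0 t1 E.
- have [le|/ltW le] := lerP (emb p).1 (emb q).1.
    by exists p, q; split=> //; apply: convex_comb_between.
  exists q, p; split=> //.
  have -> : (1 - t) * (emb p).1 + t * (emb q).1 =
            (1 - (1 - t)) * (emb q).1 + (1 - t) * (emb p).1 by ring.
  by apply: convex_comb_between => //; [rewrite subr_ge0 | rewrite gerDl oppr_le0].
- subst t; move: E; rewrite subr0 !mul1r !mul0r !addr0 => /eqP; rewrite eqr_int => /eqP pg.
  by exists p, p; rewrite lexx.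
- subst t; move: E; rewrite subrr !mul1r !mul0r !add0r => /eqP; rewrite eqr_int => /eqP qg.
  by exists q, q; rewrite lexx.
Qed.

Lemma horizontal_ray_component (A : set (R * R)) (z : R * R) (c : R) :
  (forall t, 0 <= t -> A (z.1 + c * t, z.2)) ->
  forall t, 0 <= t -> connected_component A z (z.1 + c * t, z.2).
Proof.
move=> rayA t t0.
pose ray (s : R) : R * R := (z.1 + c * s, z.2).
have ray_cont : continuous ray.
  move=> s; have lin : (fun s : R => c * s) @ s --> c * s by exact: cvgMr.
  exact: (cvg_pair (@cvgD R R^o _ _ _ _ _ _ _ (cvg_cst z.1) lin) (cvg_cst z.2)).
have : ray @` `[0, t] `<=` connected_component A z.
  apply: connected_component_max.
  - exists 0; first by rewrite /= in_itv /= lexx t0.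
    by rewrite /ray mulr0 addr0 -surjective_pairing.
  - by move=> y [s]; rewrite /= in_itv /= => /andP[s0 _] <-; exact: rayA.
  - apply: connected_continuous_connected; first exact: segment_connected.
    exact: continuous_subspaceT ray_cont.
by apply; exists t; rewrite //= in_itv /= lexx t0.
Qed.

Lemma bounded_face_row_point (S : set gpt) (F : set (R * R)) (h : gpt) (c : R) :
  c = 1 \/ c = -1 -> face S F -> bounded_plane F -> F (emb h) ->
  exists p, [/\ S p, p.2 = h.2 & c * h.1%:~R <= c * p.1%:~R].
Proof.
move=> c_unit [x [_ ->]] [M boundF] Fh.
apply: contrapT => noS.
have ray_free t : 0 <= t -> (~` drawing S) ((emb h).1 + c * t, (emb h).2).
  move=> t0 /drawing_on_row /(_ erefl) [p [q [Sp Sq ph qh /andP[pz zq]]]].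
  apply: noS; move: pz zq; rewrite /emb /= ph qh.
  by case: c_unit => -> pz zq; [exists q | exists p]; split=> //; lra.
pose t := `|M| + `|(emb h).1| + 1.
have t0 : 0 <= t by rewrite /t; have := normr_ge0 M; have := normr_ge0 (emb h).1; lra.
have [/= Mt _] := boundF _ (connected_component_trans Fh
  (horizontal_ray_component ray_free t0)).
move: Mt; rewrite /t; set y := (emb h).1.
have := ler_norm M; have := ler_norm y; have := ler_norm (- y); rewrite normrN.
case: c_unit => -> /=.
- by have := ler_norm (y + 1 * (`|M| + `|y| + 1)); lra.
- by have := ler_norm (- (y + -1 * (`|M| + `|y| + 1))); rewrite normrN; lra.
Qed.

Lemma hole_point_row_between (S : set gpt) (h : gpt) : hole_point S h ->
  exists p q, [/\ S p, S q, p.2 = h.2, q.2 = h.2 & p.1 <= h.1 <= q.1].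
Proof.
move=> [F [[faceF boundF _] Fh]].
have [p [Sp ph hp]] := bounded_face_row_point (or_intror erefl) faceF boundF Fh.
have [q [Sq qh hq]] := bounded_face_row_point (or_introl erefl) faceF boundF Fh.
exists p, q; split=> //; apply/andP; split.
- by move: hp; rewrite !mulN1r lerN2 ler_int.
- by move: hq; rewrite !mul1r ler_int.
Qed.

Theorem proposition2p1 (S : set gpt) (h : gpt) :
  connected_shape S -> hole_point S h ->
  exists v1 v2, [/\ S v1, S v2 & on_shortest_path v1 v2 h].
Proof.
move=> _ /hole_point_row_between [p [q [Sp Sq ph qh phq]]].
by exists p, q; split=> //; exact: on_shortest_path_row.
Qed.
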